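(* Let $(X,d)$ be a compact metric space and $F:X\to 2^X$ a set-valued map which is open, onto and continuous. Then $F$ has the shadowing property if and only if $F^{-1}$ has the shadowing property.
   Context: $2^X$ is the family of nonempty compact subsets of $X$. A set-valued map $F$ is upper semicontinuous if for every $x$ and open $U\supset F(x)$ there is a neighborhood $V$ of $x$ with $F(y)\subset U$ for $y\in V$; lower semicontinuous if for every $x$ and open $U$ with $F(x)\cap U\ne\emptyset$ there is a neighborhood $V$ of $x$ with $F(y)\cap U\neq\emptyset$ for $y\in V$; continuous if both. $F$ is open if $F(U)=\bigcup_{u\in U}F(u)$ is open for every open $U$. $F$ is onto if every $y\in X$ lies in some $F(x)$; then $F^{-1}(y)=\{x:y\in F(x)\}$. For a set-valued map $G$, a $\delta$-pseudo-orbit is a sequence $\{x_n\}_{n\ge0}$ with $d(x_{n+1},G(x_n))<\delta$ for all $n$; a $G$-orbit is $(y_n)$ with $y_{n+1}\in G(y_n)$; $G$ has the shadowing property if for every $\varepsilon>0$ there is $\delta>0$ such that every $\delta$-pseudo-orbit $\{x_n\}$ admits a $G$-orbit $(y_n)$ with $d(x_n,y_n)<\varepsilon$ for all $n$. *)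

From Stdlib Require Import Reals List.
Open Scope R_scope.

Section MetricDefs.
Context {X : Type} (d : X -> X -> R).

Definition is_metric : Prop :=
  (forall x y, 0 <= d x y) /\
  (forall x y, d x y = 0 <-> x = y) /\
  (forall x y, d x y = d y x) /\
  (forall x y z, d x z <= d x y + d y z).

Definition open_set (U : X -> Prop) : Prop :=
  forall x, U x -> exists r, 0 < r /\ forall y, d x y < r -> U y.

Definition compact_set (K : X -> Prop) : Prop :=
  forall (I : Type) (U : I -> X -> Prop),
    (forall i, open_set (U i)) ->
    (forall x, K x -> exists i, U i x) ->
    exists l : list I, forall x, K x -> exists i, In i l /\ U i x.

Definition compact_space : Prop := compact_set (fun _ => True).

(* a set-valued map F : X -> X -> Prop, with F x viewed as the set {y | F x y} *)
(* F : X -> 2^X : values are nonempty compact subsets *)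
Definition into_2X (F : X -> X -> Prop) : Prop :=
  forall x, (exists y, F x y) /\ compact_set (F x).

Definition usc (F : X -> X -> Prop) : Prop :=
  forall x (U : X -> Prop), open_set U -> (forall y, F x y -> U y) ->
    exists r, 0 < r /\ forall x', d x x' < r -> forall y, F x' y -> U y.

Definition lsc (F : X -> X -> Prop) : Prop :=
  forall x (U : X -> Prop), open_set U -> (exists y, F x y /\ U y) ->
    exists r, 0 < r /\ forall x', d x x' < r -> exists y, F x' y /\ U y.

Definition sv_continuous (F : X -> X -> Prop) : Prop := usc F /\ lsc F.

Definition sv_open (F : X -> X -> Prop) : Prop :=
  forall U : X -> Prop, open_set U -> open_set (fun y => exists u, U u /\ F u y).

Definition sv_onto (F : X -> X -> Prop) : Prop := forall y, exists x, F x y.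

Definition sv_inv (F : X -> X -> Prop) : X -> X -> Prop := fun y x => F x y.

(* delta-pseudo-orbit: d(x_{n+1}, G(x_n)) < delta, where the point-to-set
   distance inf_{z in G(x_n)} d(x_{n+1}, z) is < delta iff some z in G(x_n)
   has d(x_{n+1}, z) < delta *)
Definition pseudo_orbit (G : X -> X -> Prop) (delta : R) (x : nat -> X) : Prop :=
  forall n, exists z, G (x n) z /\ d (x (S n)) z < delta.

Definition is_orbit (G : X -> X -> Prop) (y : nat -> X) : Prop :=
  forall n, G (y n) (y (S n)).

Definition shadowing (G : X -> X -> Prop) : Prop :=
  forall eps, 0 < eps -> exists delta, 0 < delta /\
    forall x : nat -> X, pseudo_orbit G delta x ->
      exists y : nat -> X, is_orbit G y /\ forall n, d (x n) (y n) < eps.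

End MetricDefs.

(* F is lower semicontinuous with closed graph (upper semicontinuity plus
   compact values) and has nonempty values; because F is open and onto, the
   same holds for F^-1, and (F^-1)^-1 = F.  So it suffices to show that
   shadowing passes from such a map G to G^-1.  On a compact space lower
   semicontinuity plus closed graph is uniform, hence a pseudo-orbit of G^-1,
   read backwards up to time N and then continued by an orbit of G, is a
   pseudo-orbit of G.  Shadowing it gives, for every N, a G^-1-orbit segment of
   length N shadowing the given pseudo-orbit; a König-type compactness argument
   (choose the orbit point by point so that each prefix remains a limit of such
   segments) together with the closed graph yields an infinite G^-1-orbit. *)

From Pilot Require Import Defs.
From Stdlib Require Import Reals Lra Lia List Classical ClassicalEpsilon.
Open Scope R_scope.

Lemma uniform_pos_witness_list {T : Type} (A : T -> R -> Prop) :
  (forall t s s', 0 < s' -> s' <= s -> A t s -> A t s') ->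
  forall l, (forall t, In t l -> exists s, 0 < s /\ A t s) ->
  exists s, 0 < s /\ forall t, In t l -> A t s.
Proof.
  intros Hmono l; induction l as [|a l IH]; intros Hl.
  - exists 1; split; [lra | intros t []].
  - destruct (Hl a (or_introl eq_refl)) as [s1 [Hs1 HA1]].
    destruct IH as [s2 [Hs2 HA2]]; [intros t Ht; apply Hl; now right|].
    assert (Hmin : 0 < Rmin s1 s2) by now apply Rmin_glb_lt.
    exists (Rmin s1 s2); split; [exact Hmin|].
    intros t [<- | Ht].
    + exact (Hmono _ _ _ Hmin (Rmin_l s1 s2) HA1).
    + exact (Hmono _ _ _ Hmin (Rmin_r s1 s2) (HA2 t Ht)).
Qed.

Lemma uniform_nat_witness_list {T : Type} (A : T -> nat -> Prop) :
  (forall t K K', (K <= K')%nat -> A t K -> A t K') ->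
  forall l, (forall t, In t l -> exists K, A t K) ->
  exists K, forall t, In t l -> A t K.
Proof.
  intros Hmono l; induction l as [|a l IH]; intros Hl.
  - exists O; intros t [].
  - destruct (Hl a (or_introl eq_refl)) as [K1 HA1].
    destruct IH as [K2 HA2]; [intros t Ht; apply Hl; now right|].
    exists (Nat.max K1 K2); intros t [<- | Ht].
    + exact (Hmono _ _ _ (Nat.le_max_l K1 K2) HA1).
    + exact (Hmono _ _ _ (Nat.le_max_r K1 K2) (HA2 t Ht)).
Qed.

Lemma list_min_radius {T : Type} (l : list (T * R)) :
  (forall t, In t l -> 0 < snd t) ->
  exists rho, 0 < rho /\ forall t, In t l -> rho <= snd t.
Proof.
  intros Hpos.
  apply (uniform_pos_witness_list (fun t s => s <= snd t)); [intros; lra|].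
  intros t Ht; exists (snd t); split; [exact (Hpos t Ht) | lra].
Qed.

Section Metric.

Context {X : Type} (d : X -> X -> R).
Hypothesis Hm : is_metric d.

Lemma dist_refl x : d x x = 0.
Proof. now apply Hm. Qed.

Lemma dist_sym x y : d x y = d y x.
Proof. apply Hm. Qed.

Lemma dist_tri x y z : d x z <= d x y + d y z.
Proof. apply Hm. Qed.

Lemma dist_pos_neq x y : x <> y -> 0 < d x y.
Proof.
  intros Hxy; destruct Hm as [Hge [Heq _]].
  destruct (Rle_lt_or_eq_dec 0 (d x y) (Hge x y)) as [Hlt | Hzero]; [exact Hlt|].
  now exfalso; apply Hxy, Heq.
Qed.

Lemma open_ball p r : Defs.open_set d (fun z => d p z < r).
Proof.
  intros z Hz; exists (r - d p z); split; [lra|].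
  intros y Hy; pose proof (dist_tri p z y); lra.
Qed.

Lemma open_dist_gt c t : Defs.open_set d (fun z => t < d z c).
Proof.
  intros z Hz; exists (d z c - t); split; [lra|].
  intros y Hy; pose proof (dist_tri z y c); lra.
Qed.

Lemma compact_ball_subcover (K : X -> Prop) (P : X -> R -> Prop) :
  compact_set d K -> (forall c, K c -> exists r, 0 < r /\ P c r) ->
  exists l : list (X * R), (forall t, In t l -> 0 < snd t /\ P (fst t) (snd t)) /\
    forall x, K x -> exists t, In t l /\ d (fst t) x < snd t.
Proof.
  intros Hc HP.
  destruct (Hc {t : X * R | 0 < snd t /\ P (fst t) (snd t)}
              (fun i x => d (fst (proj1_sig i)) x < snd (proj1_sig i))) as [l Hl].
  - intros i; apply open_ball.
  - intros x Kx; destruct (HP x Kx) as [r [Hr Pr]].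
    exists (exist (fun t : X * R => 0 < snd t /\ P (fst t) (snd t)) (x, r) (conj Hr Pr)).
    simpl; now rewrite dist_refl.
  - exists (map (@proj1_sig _ _) l); split.
    + intros t Ht; apply in_map_iff in Ht as [i [<- _]]; exact (proj2_sig i).
    + intros x Kx; destruct (Hl x Kx) as [i [Hi Ui]].
      exists (proj1_sig i); split; [now apply in_map | exact Ui].
Qed.

Definition closed_graph (G : X -> X -> Prop) : Prop :=
  forall a c, ~ G a c -> exists r, 0 < r /\
    forall a' c', d a a' < r -> d c c' < r -> ~ G a' c'.

Lemma closed_graph_inv G : closed_graph G -> closed_graph (sv_inv G).
Proof.
  intros Hcg a c Hac; destruct (Hcg c a Hac) as [r [Hr Hfar]].
  exists r; split; [exact Hr|]; intros a' c' Ha Hc; exact (Hfar c' a' Hc Ha).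
Qed.

(* A compact value F a lies at positive distance rho from any c outside it. *)
Lemma usc_closed_graph F : into_2X d F -> usc d F -> closed_graph F.
Proof.
  intros H2X Husc a c Hac.
  destruct (compact_ball_subcover (F a) (fun z r => r = d z c / 2) (proj2 (H2X a)))
    as [l [Hl Hcov]].
  { intros z Hz; exists (d z c / 2); split; [|reflexivity].
    assert (z <> c) by (intros ->; contradiction).
    pose proof (dist_pos_neq z c H); lra. }
  destruct (list_min_radius l) as [rho [Hrho Hle]]; [intros t Ht; apply Hl, Ht|].
  assert (Hfar : forall z, F a z -> rho < d z c).
  { intros z Hz; destruct (Hcov z Hz) as [t [Ht Hd]].
    destruct (Hl t Ht) as [_ Heq]; specialize (Hle t Ht).
    pose proof (dist_tri (fst t) z c); lra. }
  destruct (Husc a (fun z => rho / 2 < d z c) (open_dist_gt c (rho / 2))) as [s [Hs Hnear]].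
  { intros z Hz; specialize (Hfar z Hz); lra. }
  exists (Rmin s (rho / 2)); split; [apply Rmin_glb_lt; lra|].
  intros a' c' Ha Hc HF.
  pose proof (Rmin_l s (rho / 2)); pose proof (Rmin_r s (rho / 2)).
  specialize (Hnear a' ltac:(lra) c' HF); simpl in Hnear.
  rewrite (dist_sym c' c) in Hnear; lra.
Qed.

Lemma open_lsc_inv F : sv_open d F -> lsc d (sv_inv F).
Proof.
  intros Hop x U HU [y [Hy Uy]].
  destruct (Hop U HU x (ex_intro _ y (conj Uy Hy))) as [r [Hr Hball]].
  exists r; split; [exact Hr|].
  intros x' Hx'; destruct (Hball x' Hx') as [u [Uu Fu]]; now exists u.
Qed.

Hypothesis Hc : compact_space d.

Definition uniformly_lsc (G : X -> X -> Prop) : Prop :=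
  forall eta, 0 < eta -> exists delta, 0 < delta /\
    forall a b c, G a c -> d a b < delta -> exists z, G b z /\ d c z < eta.

(* Cover X by balls around points c: near each c either some point of G a
   stays close under perturbation of a (lsc), or the graph misses a
   neighbourhood of (a, c) (closed graph). *)
Lemma lsc_closed_graph_locally_uniform G : lsc d G -> closed_graph G ->
  forall eta a, 0 < eta -> exists s, 0 < s /\
    forall a' b c', d a a' < s -> d a b < s -> G a' c' -> exists z, G b z /\ d c' z < eta.
Proof.
  intros Hl Hcg eta a Heta.
  set (Near c rho s := (G a c /\ forall b, d a b < s -> exists z, G b z /\ d c z < eta / 2) \/
                       (forall a' c', d a a' < s -> d c c' < rho -> ~ G a' c')).
  destruct (compact_ball_subcover (fun _ => True)
              (fun c rho => rho <= eta / 2 /\ exists s, 0 < s /\ Near c rho s) Hc)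
    as [l [Hl1 Hcov]].
  - intros c _; destruct (classic (G a c)) as [Hac | Hac].
    + destruct (Hl a (fun z => d c z < eta / 2) (open_ball c (eta / 2))) as [s [Hs Hb]].
      { exists c; split; [exact Hac | rewrite dist_refl; lra]. }
      exists (eta / 2); split; [lra|]; split; [lra|].
      exists s; split; [exact Hs | now left].
    + destruct (Hcg a c Hac) as [r [Hr Hfar]].
      exists (Rmin r (eta / 2)); split; [apply Rmin_glb_lt; lra|].
      split; [apply Rmin_r|]; exists r; split; [exact Hr|]; right.
      intros a' c' H1 H2; apply Hfar; [exact H1|].
      eapply Rlt_le_trans; [exact H2 | apply Rmin_l].
  - destruct (uniform_pos_witness_list (fun t s => Near (fst t) (snd t) s) ) with (l := l)
      as [s [Hs Hnear]].
    + intros t s s' _ Hle [[Hg Hb] | Hn]; [left | right].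
      * split; [exact Hg|]; intros b Hb'; apply Hb; lra.
      * intros a' c' H1 H2; apply Hn; lra.
    + intros t Ht; apply (Hl1 t Ht).
    + exists s; split; [exact Hs|]; intros a' b c' H1 H2 Hg.
      destruct (Hcov c' I) as [t [Ht Hd]].
      destruct (Hnear t Ht) as [[_ Hb] | Hn]; [| now exfalso; apply (Hn a' c')].
      destruct (Hb b H2) as [z [Hz Hdz]]; exists z; split; [exact Hz|].
      destruct (Hl1 t Ht) as [_ [Hle _]].
      pose proof (dist_tri c' (fst t) z); rewrite (dist_sym c' (fst t)) in *; lra.
Qed.

Lemma lsc_closed_graph_uniformly_lsc G : lsc d G -> closed_graph G -> uniformly_lsc G.
Proof.
  intros Hl Hcg eta Heta.
  destruct (compact_ball_subcover (fun _ => True)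
     (fun a r => forall a' b c', d a a' < 2 * r -> d a b < 2 * r -> G a' c' ->
        exists z, G b z /\ d c' z < eta) Hc) as [l [Hl1 Hcov]].
  - intros a _; destruct (lsc_closed_graph_locally_uniform G Hl Hcg eta a Heta) as [s [Hs Hloc]].
    exists (s / 2); split; [lra|]; intros a' b c' H1 H2; apply Hloc; lra.
  - destruct (list_min_radius l) as [delta [Hdelta Hle]]; [intros t Ht; apply Hl1, Ht|].
    exists delta; split; [exact Hdelta|]; intros a b c Hg Hab.
    destruct (Hcov a I) as [t [Ht Hd]]; destruct (Hl1 t Ht) as [_ HP].
    specialize (Hle t Ht); pose proof (dist_tri (fst t) a b).
    apply (HP a b c); [lra | lra | exact Hg].
Qed.

Section Limit.

Variables (H : X -> X -> Prop) (x : nat -> X) (e : R).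

Definition shadow_segment (N : nat) (u : nat -> X) : Prop :=
  (forall i, (i < N)%nat -> H (u i) (u (S i))) /\ (forall i, (i <= N)%nat -> d (x i) (u i) < e).

Definition close_prefix (n : nat) (v u : nat -> X) (r : R) : Prop :=
  forall i, (i < n)%nat -> d (v i) (u i) < r.

Definition shadow_prefix (n : nat) (v : nat -> X) : Prop :=
  forall r, 0 < r -> forall K, exists N u,
    (K <= N)%nat /\ shadow_segment N u /\ close_prefix n v u r.

Definition prefix_snoc (v : nat -> X) (n : nat) (p : X) : nat -> X :=
  fun i => if (i <? n)%nat then v i else p.

Lemma close_prefix_snoc n v u p r :
  close_prefix n v u r -> d p (u n) < r -> close_prefix (S n) (prefix_snoc v n p) u r.
Proof.
  intros Hv Hp i Hi; unfold prefix_snoc.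
  destruct (Nat.ltb_spec i n) as [Hin | Hin]; [now apply Hv|].
  now replace i with n by lia.
Qed.

(* Otherwise every p is separated, after some time K_p, from the segments
   r_p-close to v, and finitely many balls B(p, r_p) cover X. *)
Lemma shadow_prefix_snoc n v :
  shadow_prefix n v -> exists p, shadow_prefix (S n) (prefix_snoc v n p).
Proof.
  intros Hv; apply NNPP; intros Hnone.
  set (Sep p r K := forall N u, (K <= N)%nat -> shadow_segment N u ->
                      close_prefix n v u r -> r <= d p (u n)).
  destruct (compact_ball_subcover (fun _ => True) (fun p r => exists K, Sep p r K) Hc)
    as [l [Hl Hcov]].
  - intros p _; apply NNPP; intros Hnsep; apply Hnone; exists p.
    intros r Hr K; apply NNPP; intros Hno; apply Hnsep.
    exists r; split; [exact Hr|]; exists K; intros N u HKN Hseg Hclose.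
    apply Rnot_lt_le; intros Hnear; apply Hno.
    exists N, u; split; [exact HKN|]; split; [exact Hseg|].
    now apply close_prefix_snoc.
  - destruct (list_min_radius l) as [rho [Hrho Hle]]; [intros t Ht; apply Hl, Ht|].
    destruct (uniform_nat_witness_list (fun t K => Sep (fst t) (snd t) K)) with (l := l)
      as [K HK].
    + intros t K K' HKK' Hsep N u HN; apply Hsep; lia.
    + intros t Ht; apply (Hl t Ht).
    + destruct (Hv rho Hrho K) as [N [u [HKN [Hseg Hclose]]]].
      destruct (Hcov (u n) I) as [t [Ht Hd]].
      enough (snd t <= d (fst t) (u n)) by lra.
      apply (HK t Ht N u HKN Hseg).
      intros i Hi; specialize (Hclose i Hi); specialize (Hle t Ht); lra.
Qed.

Hypothesis segments : forall N, exists u, shadow_segment N u.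

Definition next_point (n : nat) (v : nat -> X) : X :=
  epsilon (inhabits (x O)) (fun p => shadow_prefix (S n) (prefix_snoc v n p)).

Fixpoint prefixes (n : nat) : nat -> X :=
  match n with
  | O => fun _ => x O
  | S m => prefix_snoc (prefixes m) m (next_point m (prefixes m))
  end.

Lemma shadow_prefixes n : shadow_prefix n (prefixes n).
Proof.
  induction n as [|n IH].
  - intros r _ K; destruct (segments K) as [u Hu].
    exists K, u; split; [lia|]; split; [exact Hu|]; intros i Hi; lia.
  - apply (epsilon_spec (inhabits (x O)) (fun p => shadow_prefix (S n) (prefix_snoc _ n p))).
    now apply shadow_prefix_snoc.
Qed.

Lemma prefixes_stable n i : (i < n)%nat -> prefixes n i = prefixes (S i) i.
Proof.
  induction n as [|m IH]; intros Hi; [lia|].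
  destruct (Nat.eq_dec i m) as [-> | Hne]; [reflexivity|].
  simpl; unfold prefix_snoc; destruct (Nat.ltb_spec i m); [apply IH|]; lia.
Qed.

Hypothesis Hcg : closed_graph H.

Lemma segments_limit_orbit : exists y, is_orbit H y /\ forall n, d (x n) (y n) <= e.
Proof.
  exists (fun i => prefixes (S i) i); split.
  - intros i; apply NNPP; intros Hn; destruct (Hcg _ _ Hn) as [r [Hr Hfar]].
    destruct (shadow_prefixes (S (S i)) r Hr (S i)) as [N [u [HN [[Horb _] Hclose]]]].
    apply (Hfar (u i) (u (S i))).
    + rewrite <- (prefixes_stable (S (S i)) i) by lia; apply Hclose; lia.
    + apply Hclose; lia.
    + apply Horb; lia.
  - intros i; apply Rnot_lt_le; intros Hlt.
    set (yi := prefixes (S i) i) in *.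
    destruct (shadow_prefixes (S i) (d (x i) yi - e) ltac:(lra) i)
      as [N [u [HN [[_ Hshadow] Hclose]]]].
    specialize (Hshadow i HN); specialize (Hclose i ltac:(lia)).
    pose proof (dist_tri (x i) (u i) yi); rewrite (dist_sym (u i) yi) in *.
    fold yi in Hclose; lra.
Qed.

End Limit.

Section Inverse.

Variable G : X -> X -> Prop.
Hypothesis Htotal : forall a, exists b, G a b.

Lemma total_orbit a : exists y, y O = a /\ is_orbit G y.
Proof.
  destruct (choice G Htotal) as [f Hf].
  exists (fun n => Nat.iter n f a); split; [reflexivity|]; intros n; apply Hf.
Qed.

(* x_N, ..., x_0 read backwards, then continued by a G-orbit of x_0. *)
Lemma reversed_pseudo_orbit (x z : nat -> X) delta eta N :
  0 < eta -> (forall a b c, G a c -> d a b < delta -> exists z, G b z /\ d c z < eta) ->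
  pseudo_orbit d (sv_inv G) delta x -> is_orbit G z -> z O = x O ->
  pseudo_orbit d G eta (fun k => if (k <=? N)%nat then x (N - k)%nat else z (k - N)%nat).
Proof.
  intros Heta Hunif Hx Hz Hz0 k.
  destruct (Nat.ltb_spec k N) as [Hk | Hk].
  - replace (k <=? N)%nat with true by (symmetry; apply Nat.leb_le; lia).
    replace (S k <=? N)%nat with true by (symmetry; apply Nat.leb_le; lia).
    destruct (Hx (N - S k)%nat) as [c [Hc' Hdc]].
    rewrite dist_sym in Hdc; destruct (Hunif c _ _ Hc' Hdc) as [z' [Hz' Hdz']].
    replace (N - k)%nat with (S (N - S k)) by lia; now exists z'.
  - replace (S k <=? N)%nat with false by (symmetry; apply Nat.leb_gt; lia).
    exists (z (S k - N)%nat); rewrite dist_refl; split; [|exact Heta].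
    replace (S k - N)%nat with (S (k - N)) by lia.
    destruct (Nat.leb_spec k N); [|apply Hz].
    replace k with N by lia; rewrite Nat.sub_diag, <- Hz0; apply Hz.
Qed.

Lemma shadowing_inv_segments : uniformly_lsc G -> shadowing d G ->
  forall eps, 0 < eps -> exists delta, 0 < delta /\
    forall x, pseudo_orbit d (sv_inv G) delta x -> forall N, exists u, shadow_segment (sv_inv G) x eps N u.
Proof.
  intros Hunif Hsh eps Heps.
  destruct (Hsh eps Heps) as [eta [Heta Hshadow]].
  destruct (Hunif eta Heta) as [delta [Hdelta Hnear]].
  exists delta; split; [exact Hdelta|]; intros x Hx N.
  destruct (total_orbit (x O)) as [z [Hz0 Hz]].
  destruct (Hshadow _ (reversed_pseudo_orbit x z delta eta N Heta Hnear Hx Hz Hz0))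
    as [y [Hy Hyd]].
  exists (fun i => y (N - i)%nat); split.
  - intros i Hi; unfold sv_inv.
    replace (N - i)%nat with (S (N - S i)) by lia; apply Hy.
  - intros i Hi; specialize (Hyd (N - i)%nat); simpl in Hyd.
    replace (N - i <=? N)%nat with true in Hyd by (symmetry; apply Nat.leb_le; lia).
    now replace (N - (N - i))%nat with i in Hyd by lia.
Qed.

Lemma shadowing_inv : lsc d G -> closed_graph G -> shadowing d G -> shadowing d (sv_inv G).
Proof.
  intros Hl Hcg Hsh eps Heps.
  destruct (shadowing_inv_segments (lsc_closed_graph_uniformly_lsc G Hl Hcg) Hsh (eps / 2))
    as [delta [Hdelta Hseg]]; [lra|].
  exists delta; split; [exact Hdelta|]; intros x Hx.
  destruct (segments_limit_orbit (sv_inv G) x (eps / 2) (Hseg x Hx) (closed_graph_inv G Hcg))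
    as [y [Hy Hyd]].
  exists y; split; [exact Hy|]; intros n; specialize (Hyd n); lra.
Qed.

End Inverse.

End Metric.

Theorem mainTheorem7 (X : Type) (d : X -> X -> R) (F : X -> X -> Prop) :
  is_metric d -> compact_space d -> into_2X d F ->
  sv_open d F -> sv_onto F -> sv_continuous d F ->
  (shadowing d F <-> shadowing d (sv_inv F)).
Proof.
  intros Hm Hc H2X Hop Hon [Husc Hlsc].
  assert (Hcg : closed_graph d F) by now apply usc_closed_graph.
  split.
  - apply shadowing_inv; auto; intros a; apply H2X.
  - apply (shadowing_inv d Hm Hc (sv_inv F)).
    + exact Hon.
    + exact (open_lsc_inv d F Hop).
    + exact (closed_graph_inv d F Hcg).
Qed.
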